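(* Let $\mathcal{X}=({\bm X},m^{\bm X}_\bullet,\nu^{\bm X})$ and $\mathcal{Y}=({\bm Y},m^{\bm Y}_\bullet,\nu^{\bm Y})$ be finite Markov chains (not necessarily stationary) and let $C:{\bm X}\times{\bm Y}\to\mathbb{R}_+$ be a cost function. Then for every probability distribution $p$ on $\mathbb{N}$, $$d^{p}_{\mathrm{OTM}}(\mathcal{X},\mathcal{Y};C)\;\ge\;\mathbb{E}_{T\sim p}\big(d^{(T)}_{\mathrm{WL}}(\mathcal{X},\mathcal{Y};C)\big)=\sum_{k\in\mathbb{N}}p(k)\,d^{(k)}_{\mathrm{WL}}(\mathcal{X},\mathcal{Y};C).$$
   Context: A finite Markov chain $\mathcal{X}=({\bm X},m^{\bm X}_\bullet,\nu^{\bm X})$ consists of a finite set ${\bm X}$, a transition kernel $m^{\bm X}_\bullet:{\bm X}\to\mathcal{P}({\bm X})$ and an initial distribution $\nu^{\bm X}\in\mathcal{P}({\bm X})$. For $\alpha\in\mathcal{P}({\bm X}),\beta\in\mathcal{P}({\bm Y})$, $\mathcal{C}(\alpha,\beta)$ denotes the set of couplings of $\alpha$ and $\beta$. A Markovian coupling between $\mathcal{X}$ and $\mathcal{Y}$ is a stochastic process $(X_t,Y_t)_{t\in\mathbb{N}}$ with values in ${\bm X}\times{\bm Y}$ which is a (possibly time-inhomogeneous) Markov chain, such that $\mathrm{law}(X_0,Y_0)\in\mathcal{C}(\nu^{\bm X},\nu^{\bm Y})$ and, for every $t\in\mathbb{N}$ and $x\in{\bm X},y\in{\bm Y}$, the conditional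 law of $(X_{t+1},Y_{t+1})$ given $(X_t,Y_t)=(x,y)$ lies in $\mathcal{C}(m^{\bm X}_x,m^{\bm Y}_y)$. For $p\in\mathcal{P}(\mathbb{N})$ and $T\sim p$, the Optimal Transport Markov distance is $d^{p}_{\mathrm{OTM}}(\mathcal{X},\mathcal{Y};C)=\inf\mathbb{E}\,C(X_T,Y_T)$, the infimum over all Markovian couplings $(X_t,Y_t)_{t\in\mathbb{N}}$ independent of $T$. The depth-$k$ WL distance is $d^{(k)}_{\mathrm{WL}}(\mathcal{X},\mathcal{Y};C)=\inf\mathbb{E}\,C(X_k,Y_k)$, the infimum over all Markovian couplings. *)

From HB Require Import structures.
From mathcomp Require Import all_boot all_order all_algebra.
From mathcomp Require Import all_classical all_reals all_analysis.
Set Implicit Arguments. Unset Strict Implicit. Unset Printing Implicit Defensive.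
Import Order.TTheory GRing.Theory Num.Theory.
Local Open Scope ring_scope.
Local Open Scope classical_set_scope.

Section Defs.
Variable R : realType.

Definition is_prob (T : finType) (mu : T -> R) : Prop :=
  (forall x, 0 <= mu x) /\ \sum_(x : T) mu x = 1.

Definition is_prob_nat (p : nat -> R) : Prop :=
  (forall k, 0 <= p k) /\ (\sum_(0 <= k <oo) (p k)%:E = 1)%E.

Definition is_coupling (X Y : finType) (alpha : X -> R) (beta : Y -> R)
  (g : X * Y -> R) : Prop :=
  (forall z, 0 <= g z) /\
  (forall x, \sum_(y : Y) g (x, y) = alpha x) /\
  (forall y, \sum_(x : X) g (x, y) = beta y).

Record markov_chain (X : finType) := MarkovChain {
  mc_kernel : X -> X -> R;
  mc_init : X -> R;
  mc_kernel_prob : forall x, is_prob (mc_kernel x);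
  mc_init_prob : is_prob mc_init }.

(* A Markovian coupling: a (possibly time-inhomogeneous) Markov chain on
   X * Y given by its initial law and its transition kernels at each time t. *)
Record markov_coupling (X Y : finType) (MX : markov_chain X)
    (MY : markov_chain Y) := MarkovCoupling {
  mcp_init : X * Y -> R;
  mcp_kernel : nat -> X * Y -> X * Y -> R;
  mcp_init_coupling : is_coupling (mc_init MX) (mc_init MY) mcp_init;
  mcp_kernel_coupling : forall t (z : X * Y),
    is_coupling (mc_kernel MX z.1) (mc_kernel MY z.2) (mcp_kernel t z) }.

Fixpoint mcp_law (X Y : finType) (MX : markov_chain X) (MY : markov_chain Y)
  (P : markov_coupling MX MY) (k : nat) : X * Y -> R :=
  match k with
  | 0 => mcp_init P
  | k.+1 => fun z' => \sum_(z : X * Y) mcp_law P k z * mcp_kernel P k z z'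
  end.

Definition exp_cost (X Y : finType) (MX : markov_chain X) (MY : markov_chain Y)
  (C : X -> Y -> R) (P : markov_coupling MX MY) (k : nat) : R :=
  \sum_(z : X * Y) mcp_law P k z * C z.1 z.2.

Definition d_WL (X Y : finType) (MX : markov_chain X) (MY : markov_chain Y)
  (C : X -> Y -> R) (k : nat) : \bar R :=
  ereal_inf [set (exp_cost C P k)%:E | P in [set: markov_coupling MX MY]].

(* OTM distance: E C(X_T, Y_T) with T ~ p independent of the coupling
   equals sum_k p(k) E C(X_k, Y_k). *)
Definition d_OTM (X Y : finType) (MX : markov_chain X) (MY : markov_chain Y)
  (C : X -> Y -> R) (p : nat -> R) : \bar R :=
  ereal_inf [set (\sum_(0 <= k <oo) (p k * exp_cost C P k)%:E)%E
            | P in [set: markov_coupling MX MY]].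

End Defs.

From HB Require Import structures.
From mathcomp Require Import all_boot all_order all_algebra.
From mathcomp Require Import all_classical all_reals all_analysis.
Import Order.TTheory GRing.Theory Num.Theory.
Local Open Scope ring_scope.

(* Every Markovian coupling P competes in each of the infima d_WL^(k), so
   E C(X_k, Y_k) >= d_WL^(k) under P for every k; weighting by p(k) >= 0,
   summing over k and taking the infimum over P gives the bound. *)

Section MarkovCouplingCost.
Variables (R : realType) (X Y : finType).
Variables (MX : markov_chain R X) (MY : markov_chain R Y).

Lemma mcp_law_ge0 (P : markov_coupling MX MY) k z : 0 <= mcp_law P k z.
Proof.
elim: k z => [|k IHk] z /=; first by case: (mcp_init_coupling P).
apply: sumr_ge0 => w _; apply: mulr_ge0 => //.
by case: (mcp_kernel_coupling P k w).
Qed.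

Variables (C : X -> Y -> R).
Hypothesis C_ge0 : forall x y, 0 <= C x y.

Lemma exp_cost_ge0 (P : markov_coupling MX MY) k : 0 <= exp_cost C P k.
Proof. by apply: sumr_ge0 => z _; rewrite mulr_ge0 ?mcp_law_ge0. Qed.

Lemma d_WL_ge0 k : (0 <= d_WL MX MY C k)%E.
Proof. by apply/ereal_infP => _ [P _ <-]; rewrite lee_fin exp_cost_ge0. Qed.

Lemma d_WL_le_exp_cost (P : markov_coupling MX MY) k :
  (d_WL MX MY C k <= (exp_cost C P k)%:E)%E.
Proof. by apply: ereal_inf_lbound; exists P. Qed.

End MarkovCouplingCost.

Theorem proposition6 (R : realType) (X Y : finType)
  (MX : markov_chain R X) (MY : markov_chain R Y) (C : X -> Y -> R)
  (hC : forall x y, 0 <= C x y) (p : nat -> R) (hp : is_prob_nat p) :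
  (d_OTM MX MY C p >= \sum_(0 <= k <oo) ((p k)%:E * d_WL MX MY C k))%E.
Proof.
case: hp => p_ge0 _.
apply/ereal_infP => _ [P _ <-].
apply: lee_nneseries => [k _ _|k _].
  by rewrite mule_ge0 ?lee_fin ?d_WL_ge0.
by rewrite EFinM lee_wpmul2l ?lee_fin ?d_WL_le_exp_cost.
Qed.
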